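(* Let $q\ge 3$ be odd and $n\ge 1$. There exists a quasi-complementary Lee metric Gray code of $q$-ary $n$-tuples.
   Context: Lee distance between $v,u\in\mathbb{Z}_q^n$ is $\sum_{i}\min\{|v_i-u_i|,q-|v_i-u_i|\}$ (entries regarded as integers in $\{0,\ldots,q-1\}$). A quasi-complementary Lee metric Gray code of $q$-ary $n$-tuples is an ordering $G(0),\ldots,G(q^n-1)$ of all words of $\mathbb{Z}_q^n$ such that consecutive words $G(i),G(i+1)$ ($0\le i<q^n-1$) have Lee distance $1$ and $G((i+q^{n-1})\bmod q^n)=G(i)+(1,1,\ldots,1)$ for all $i$, with addition in $\mathbb{Z}_q^n$. *)

From mathcomp Require Import all_boot.
Set Implicit Arguments. Unset Strict Implicit. Unset Printing Implicit Defensive.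

Definition word (q n : nat) := {ffun 'I_n -> 'I_q}.

Definition lee_entry (q a b : nat) : nat :=
  let d := maxn a b - minn a b in minn d (q - d).

Definition lee_dist (q n : nat) (v u : word q n) : nat :=
  \sum_(i < n) lee_entry q (v i) (u i).

(* v + (1,1,...,1) in Z_q^n  (insubd default is never used since q > 0). *)
Definition add_ones (q n : nat) (v : word q n) : word q n :=
  [ffun i => insubd (v i) ((v i + 1) %% q)].

Definition qc_lee_gray_code (q n : nat) (G : 'I_(q ^ n) -> word q n) : Prop :=
  [/\ bijective G,
      (forall i j : 'I_(q ^ n), val j = (val i).+1 -> lee_dist (G i) (G j) = 1) &
      (forall i j : 'I_(q ^ n), val j = (val i + q ^ (n - 1)) %% q ^ n ->
          G j = add_ones (G i))].

From mathcomp Require Import all_boot.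
From mathcomp Require Import zify.
Set Implicit Arguments. Unset Strict Implicit. Unset Printing Implicit Defensive.

(* Let n = m + 1.  Write i = t * q^m + r with t < q and r < q^m, and let Z(r)
   be the q-ary reflected Gray code of r, padded with a zero (m+1)-th digit.  The code
   G(i) := t * (1,...,1) - Z(r) works.  Inside a block of fixed t, consecutive
   words differ by one Gray step, i.e. by +-1 in a single coordinate.  Adding
   q^m to i increments t and hence adds (1,...,1).  Finally, since q is odd the
   last reflected Gray word is (q-1,...,q-1,0), so the block change from
   t * q^m + q^m - 1 to (t+1) * q^m only moves the last coordinate, from t to
   t+1. *)

Definition distn (a b : nat) := (a - b) + (b - a).

Section ReflectedGray.

Variable q : nat.
Hypothesis q_gt0 : 0 < q.

(* [gray r j] is the j-th digit of the q-ary reflected Gray code of r: the j-th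
   base-q digit a of r, replaced by q-1-a when the digits above it form an odd
   number. *)
Definition reflect_digit (x : nat) :=
  if odd (x %/ q) then q.-1 - x %% q else x %% q.

Definition gray (r j : nat) := reflect_digit (r %/ q ^ j).

Lemma gray_lt r j : gray r j < q.
Proof.
by rewrite /gray /reflect_digit; have := ltn_pmod (r %/ q ^ j) q_gt0; case: odd; lia.
Qed.

Lemma reflect_digitE c a : a < q ->
  reflect_digit (c * q + a) = if odd c then q.-1 - a else a.
Proof.
by move=> ltaq; rewrite /reflect_digit divnMDl // divn_small // addn0 modnMDl modn_small.
Qed.

Lemma gray0 r : gray r 0 = reflect_digit r.
Proof. by rewrite /gray expn0 divn1. Qed.

Lemma grayS r j : gray r j.+1 = gray (r %/ q) j.
Proof. by rewrite /gray expnS divnMA. Qed.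

Lemma gray_small r j : r < q ^ j -> gray r j = 0.
Proof. by move=> ltr; rewrite /gray divn_small // /reflect_digit div0n mod0n. Qed.

Lemma gray_succ m r : r.+1 < q ^ m ->
  \sum_(j < m) distn (gray r j) (gray r.+1 j) = 1.
Proof.
elim: m r => [|m IH] r; first by rewrite expn0.
rewrite big_ord_recl /= !gray0 (divn_eq r q) => ltr.
under eq_bigr => j _ do rewrite /bump /= add1n !grayS.
set c := r %/ q in ltr *; set a := r %% q in ltr *.
have ltaq : a < q by exact: ltn_pmod.
case: (ltnP a.+1 q) => [ltSaq | leqSa].
- rewrite -addnS !reflect_digitE // !divnMDl // !divn_small // !addn0.
  rewrite big1 ?addn0; last by move=> j _; rewrite /distn; lia.
  by rewrite /distn; case: odd; lia.
- have carry : (c * q + a).+1 = c.+1 * q + 0 by rewrite mulSn; lia.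
  rewrite carry; have -> : a = q.-1 by lia.
  rewrite !reflect_digitE // ?prednK // !divnMDl // !divn_small ?prednK // !addn0.
  rewrite IH; first by rewrite /distn /=; case: odd => /=; lia.
  by rewrite -(ltn_pmul2r q_gt0) -expnSr; lia.
Qed.

Lemma gray_inj m r r' : r < q ^ m -> r' < q ^ m ->
  (forall j : 'I_m, gray r j = gray r' j) -> r = r'.
Proof.
elim: m r r' => [|m IH] r r'; first by rewrite expn0; case: r => //; case: r'.
move=> ltr ltr' eq_gray.
have eq_div : r %/ q = r' %/ q.
  apply: IH; rewrite ?ltn_divLR // -?expnSr // => j.
  by rewrite -!grayS; exact: (eq_gray (lift ord0 j)).
have := eq_gray ord0; rewrite !gray0 (divn_eq r q) (divn_eq r' q) -eq_div.
rewrite !reflect_digitE ?ltn_pmod // => eq_digit.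
have eq_mod : r %% q = r' %% q.
  by have := ltn_pmod r q_gt0; have := ltn_pmod r' q_gt0; case: odd eq_digit; lia.
by rewrite (divn_eq r q) (divn_eq r' q) eq_div eq_mod.
Qed.

Lemma gray_last m j : odd q -> j < m -> gray (q ^ m).-1 j = q.-1.
Proof.
move=> oddq ltjm; have -> : m = j + (m - j).-1.+1 by lia.
set k := (m - j).-1.
have pos_qj : 0 < q ^ j by rewrite expn_gt0 q_gt0.
have pos_qk : 0 < q ^ k by rewrite expn_gt0 q_gt0.
have -> : (q ^ (j + k.+1)).-1 = (q ^ k.+1).-1 * q ^ j + (q ^ j).-1.
  by rewrite expnD; nia.
rewrite /gray divnMDl // divn_small ?addn0; last by lia.
have -> : (q ^ k.+1).-1 = (q ^ k).-1 * q + q.-1 by rewrite expnSr; nia.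
rewrite reflect_digitE; last by lia.
have : odd (q ^ k) by rewrite oddX oddq orbT.
by case: (q ^ k) pos_qk => // x _ /= /negbTE ->.
Qed.

End ReflectedGray.

Lemma lee_entryC q a b : lee_entry q a b = lee_entry q b a.
Proof. by rewrite /lee_entry; lia. Qed.

Lemma lee_entry_modS q x : 1 < q -> lee_entry q (x %% q) (x.+1 %% q) = 1.
Proof.
move=> gt1q; rewrite -addn1 -modnDml.
have := ltn_pmod x (ltnW gt1q); set a := x %% q => ltaq.
case: (ltnP a.+1 q) => [ltSaq | leqSa].
  by rewrite addn1 modn_small // /lee_entry; lia.
have -> : a + 1 = q by lia.
by rewrite modnn /lee_entry; lia.
Qed.

Lemma lee_entry_sub q s z z' : z < q -> z' < q -> distn z z' <= 1 ->
  lee_entry q ((s + (q - z)) %% q) ((s + (q - z')) %% q) = distn z z'.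
Proof.
move=> ltzq ltz'q near.
have [<-|neq] := eqVneq z z'; first by rewrite /lee_entry /distn; lia.
have gt1q : 1 < q by rewrite /distn in near; lia.
have [-> | ->] : z' = z.+1 \/ z = z'.+1 by rewrite /distn in near; lia.
- have -> : s + (q - z) = (s + (q - z.+1)).+1 by lia.
  by rewrite lee_entryC lee_entry_modS // /distn; lia.
- have -> : s + (q - z') = (s + (q - z'.+1)).+1 by lia.
  by rewrite lee_entry_modS // /distn; lia.
Qed.

Lemma subn_mod_inj q z z' : z < q -> z' < q -> q - z = q - z' %[mod q] -> z = z'.
Proof.
case: z => [|z] ltz; case: z' => [|z'] ltz'; rewrite ?subn0 ?modnn ?modn_small //; lia.
Qed.

Section Code.

Variables q m : nat.
Hypothesis q_gt0 : 0 < q.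

Let qm_gt0 : 0 < q ^ m. Proof. by rewrite expn_gt0 q_gt0. Qed.

(* t - Z_j(r) in Z_q, with q - Z_j(r) avoiding truncated subtraction. *)
Definition code_entry (i j : nat) :=
  (i %/ q ^ m + (q - gray q (i %% q ^ m) j)) %% q.

Definition qc_code (i : 'I_(q ^ m.+1)) : word q m.+1 :=
  [ffun j : 'I_m.+1 => Ordinal (ltn_pmod (code_entry i j) q_gt0)].

Lemma qc_codeE i k : qc_code i k = code_entry i k :> nat.
Proof. by rewrite ffunE /= /code_entry modn_mod. Qed.

Lemma block_lt i : i < q ^ m.+1 -> i %/ q ^ m < q.
Proof. by rewrite ltn_divLR // -expnS. Qed.

Lemma code_entry_last i : i < q ^ m.+1 -> code_entry i m = i %/ q ^ m.
Proof.
move=> lti; rewrite /code_entry gray_small ?ltn_pmod // subn0 modnDr.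
by rewrite modn_small ?block_lt.
Qed.

Lemma qc_code_inj : injective qc_code.
Proof.
move=> i i' /ffunP eq_code.
have eq_entry (k : 'I_m.+1) : code_entry i k = code_entry i' k.
  by rewrite -!qc_codeE eq_code.
have eq_div : i %/ q ^ m = i' %/ q ^ m.
  by have := eq_entry ord_max; rewrite /= !code_entry_last.
have eq_mod : i %% q ^ m = i' %% q ^ m.
  apply: (gray_inj q_gt0 (ltn_pmod _ qm_gt0) (ltn_pmod _ qm_gt0)) => k.
  move: (eq_entry (widen_ord (leqnSn m) k)); rewrite /code_entry /= eq_div.
  by move/eqP; rewrite eqn_modDl => /eqP /subn_mod_inj; apply; exact: gray_lt.
apply: val_inj.
by rewrite /= (divn_eq i (q ^ m)) (divn_eq i' (q ^ m)) eq_div eq_mod.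
Qed.

Lemma qc_code_step_in_block (i j : 'I_(q ^ m.+1)) :
  (i %% q ^ m).+1 < q ^ m -> val j = i.+1 -> lee_dist (qc_code i) (qc_code j) = 1.
Proof.
move=> ltS eqj.
have split_j : val j = i %/ q ^ m * q ^ m + (i %% q ^ m).+1.
  by rewrite eqj addnS -divn_eq.
have div_j : j %/ q ^ m = i %/ q ^ m.
  by rewrite split_j divnMDl // (divn_small ltS) addn0.
have mod_j : j %% q ^ m = (i %% q ^ m).+1 by rewrite split_j modnMDl modn_small.
have gray_step := gray_succ q_gt0 (leq_trans ltS (leq_pexp2l q_gt0 (leqnSn m))).
rewrite /lee_dist -[RHS]gray_step; apply: eq_bigr => k _.
rewrite !qc_codeE /code_entry div_j mod_j lee_entry_sub ?gray_lt //.
by move: gray_step; rewrite (bigD1 k) //=; lia.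
Qed.

Lemma qc_code_step_block_change (i j : 'I_(q ^ m.+1)) : odd q ->
  (i %% q ^ m).+1 = q ^ m -> val j = i.+1 -> lee_dist (qc_code i) (qc_code j) = 1.
Proof.
move=> oddq eqS eqj.
have split_j : val j = (i %/ q ^ m).+1 * q ^ m + 0.
  by have := divn_eq i (q ^ m); rewrite mulSn; lia.
have div_j : j %/ q ^ m = (i %/ q ^ m).+1.
  by rewrite split_j divnMDl // div0n addn0.
have mod_j : j %% q ^ m = 0 by rewrite split_j modnMDl mod0n.
have mod_i : i %% q ^ m = (q ^ m).-1 by lia.
rewrite /lee_dist big_ord_recr /= big1 => [|k _].
- rewrite !qc_codeE !(code_entry_last (ltn_ord _)) div_j.
  have := block_lt (ltn_ord j); rewrite div_j /lee_entry.
  by move: (i %/ q ^ m) => t; lia.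
- rewrite !qc_codeE /code_entry div_j mod_j mod_i.
  rewrite (gray_last q_gt0 oddq (ltn_ord k)).
  rewrite gray_small ?expn_gt0 ?q_gt0 // subn0 modnDr.
  have -> : i %/ q ^ m + (q - q.-1) = (i %/ q ^ m).+1 by lia.
  by rewrite /lee_entry; lia.
Qed.

Lemma qc_code_step (i j : 'I_(q ^ m.+1)) : odd q ->
  val j = i.+1 -> lee_dist (qc_code i) (qc_code j) = 1.
Proof.
move=> oddq eqj; case: (ltnP (i %% q ^ m).+1 (q ^ m)) => [ltS | geS].
  exact: qc_code_step_in_block.
by apply: qc_code_step_block_change => //; have := ltn_pmod i qm_gt0; lia.
Qed.

Lemma code_entry_shift i k :
  code_entry ((i + q ^ m) %% q ^ m.+1) k = (code_entry i k + 1) %% q.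
Proof.
rewrite /code_entry expnS -modn_divl (modn_dvdm _ (dvdn_mull _ (dvdnn _))) modnDr.
by rewrite divnDr ?dvdnn // divnn qm_gt0 !modnDml; congr (_ %% _); lia.
Qed.

Lemma qc_code_shift (i j : 'I_(q ^ m.+1)) :
  val j = (i + q ^ m) %% q ^ m.+1 -> qc_code j = add_ones (qc_code i).
Proof.
move=> eqj; apply/ffunP => k; apply: val_inj.
rewrite /add_ones !ffunE /= val_insubd ltn_pmod // modnDml.
by rewrite -code_entry_shift -eqj modn_mod.
Qed.

End Code.

Theorem corollary2 (q n : nat) :
  3 <= q -> odd q -> 1 <= n ->
  exists G : 'I_(q ^ n) -> word q n, qc_lee_gray_code G.
Proof.
move=> ge3q oddq; case: n => // m _; have q_gt0 : 0 < q by lia.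
exists (@qc_code q m q_gt0); split.
- by apply: inj_card_bij; [exact: qc_code_inj | rewrite card_ffun !card_ord].
- by move=> i j; exact: qc_code_step.
- by move=> i j; rewrite subSS subn0; exact: qc_code_shift.
Qed.
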